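(* Fix $p\geq 3$ and put $\lambda=\lambda_p=2\cos(\pi/p)$. Let $[r_0;r_1,r_2,\dots]$ be an admissible $\lambda$-continued fraction. Then (i) if $m\geq 1$ and $r_m=r_{m+1}=\cdots=r_{m+j-1}=1$, then $j\leq p-3$; and (ii) if $r_0=r_1=\cdots=r_{j-1}=1$, then $j\leq p-2$.
   Context: Every finite real $\alpha$ is expanded by the ''next integral multiple of $\lambda$'' algorithm: $\alpha_0=\alpha$, and for $j\ge 0$, $r_j=\lfloor \alpha_j/\lambda\rfloor+1$ and $\alpha_{j+1}=\frac{1}{r_j\lambda-\alpha_j}$; the sequence $[r_0;r_1,\dots]$ is the $\lambda$-continued fraction of $\alpha$, where $[r_0;r_1,\dots,r_n]=r_0\lambda-\cfrac{1}{r_1\lambda-\cfrac{1}{\ddots-\cfrac{1}{r_n\lambda}}}$. A $\lambda$-continued fraction is admissible if it arises from some finite real number by this algorithm. *)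

From Stdlib Require Import Reals ZArith Arith.
Open Scope R_scope.

Definition lam (p : nat) : R := 2 * cos (PI / INR p).

(* floor x = Int_part x (Stdlib: Int_part x = up x - 1, the greatest integer <= x) *)
Definition rfloor (x : R) : Z := Int_part x.

Definition lcf_digit_of (p : nat) (x : R) : Z := (rfloor (x / lam p) + 1)%Z.

Fixpoint lcf_alpha (p : nat) (a : R) (n : nat) : R :=
  match n with
  | O => a
  | S n' => let x := lcf_alpha p a n' in
            / (IZR (lcf_digit_of p x) * lam p - x)
  end.

Definition lcf_digit (p : nat) (a : R) (n : nat) : Z :=
  lcf_digit_of p (lcf_alpha p a n).

(* Put θ = π/p and s_n = sin(nθ); then λ s_(n+1) = s_n + s_(n+2), s_n > 0 for
   0 < n < p, and s_(p-2)/s_(p-1) = λ.  A digit 1 means 0 ≤ α_j < λ, and then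
   α_j ≥ s_k/s_(k+1) forces α_(j+1) = 1/(λ - α_j) ≥ s_(k+1)/s_(k+2).  A run of
   ones starting from α_m ≥ s_k/s_(k+1) therefore ends before the ratio reaches
   s_(p-2)/s_(p-1) = λ, i.e. has length at most p-2-k.  A leading digit 1 gives
   α_0 ≥ 0 = s_0/s_1, and α_m ≥ 1/λ = s_1/s_2 for every m ≥ 1, whence the bounds
   p-2 and p-3. *)
From Stdlib Require Import Reals ZArith Arith Lra Lia.
Open Scope R_scope.

Lemma INR_ge3 (p : nat) : (3 <= p)%nat -> 3 <= INR p.
Proof. intros Hp. replace 3 with (INR 3) by (simpl; lra). now apply le_INR. Qed.

Lemma lam_gt0 (p : nat) : (3 <= p)%nat -> 0 < lam p.
Proof.
  intros Hp. unfold lam. pose proof (INR_ge3 p Hp). pose proof PI_RGT_0.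
  assert (Hpos : 0 < PI / INR p) by (apply Rdiv_lt_0_compat; lra).
  assert (Hlt : PI / INR p < PI / 2).
  { apply Rmult_lt_compat_l; [lra|]. apply Rinv_lt_contravar; lra. }
  assert (0 < cos (PI / INR p)) by (apply cos_gt_0; lra). lra.
Qed.

Section Algorithm.

Variables (p : nat) (a : R).
Hypothesis lam_pos : 0 < lam p.

Lemma lcf_gap_bounds (x : R) :
  0 < IZR (lcf_digit_of p x) * lam p - x <= lam p.
Proof.
  unfold lcf_digit_of, rfloor. rewrite plus_IZR.
  destruct (base_Int_part (x / lam p)) as [Hle Hgt].
  assert (Ex : x = x / lam p * lam p) by (field; lra).
  set (w := x / lam p) in *. set (z := IZR (Int_part w)) in *.
  rewrite Ex. split; nra.
Qed.

Lemma lcf_digit_of_eq1 (x : R) : lcf_digit_of p x = 1%Z -> 0 <= x < lam p.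
Proof.
  unfold lcf_digit_of, rfloor. intros H.
  assert (Hz : Int_part (x / lam p) = 0%Z) by lia.
  destruct (base_Int_part (x / lam p)) as [Hle Hgt]. rewrite Hz in Hle, Hgt.
  assert (Ex : x = x / lam p * lam p) by (field; lra).
  set (w := x / lam p) in *. simpl in *. rewrite Ex. split; nra.
Qed.

Lemma lcf_alpha_S_ge_inv_lam (m : nat) : / lam p <= lcf_alpha p a (S m).
Proof.
  simpl. destruct (lcf_gap_bounds (lcf_alpha p a m)).
  now apply Rinv_le_contravar.
Qed.

Lemma lcf_alpha_S_digit1 (m : nat) : lcf_digit p a m = 1%Z ->
  lcf_alpha p a (S m) = / (lam p - lcf_alpha p a m).
Proof. unfold lcf_digit. intros H. simpl. rewrite H. f_equal. ring. Qed.

End Algorithm.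

Definition sinp (p n : nat) : R := sin (INR n * (PI / INR p)).

Lemma sinp_0 (p : nat) : sinp p 0 = 0.
Proof. unfold sinp. simpl. now rewrite Rmult_0_l, sin_0. Qed.

Lemma sinp_gt0 (p n : nat) : (3 <= p)%nat -> (0 < n < p)%nat -> 0 < sinp p n.
Proof.
  intros Hp Hn. unfold sinp. pose proof (INR_ge3 p Hp). pose proof PI_RGT_0.
  assert (1 <= INR n) by (replace 1 with (INR 1) by reflexivity; apply le_INR; lia).
  assert (INR n < INR p) by (apply lt_INR; lia).
  apply sin_gt_0.
  - apply Rmult_lt_0_compat; [lra|]. apply Rdiv_lt_0_compat; lra.
  - replace PI with (INR p * (PI / INR p)) at 2 by (field; lra).
    apply Rmult_lt_compat_r; [apply Rdiv_lt_0_compat|]; lra.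
Qed.

Lemma sinp_rec (p n : nat) : lam p * sinp p (S n) = sinp p n + sinp p (S (S n)).
Proof.
  unfold lam, sinp. set (t := PI / INR p). rewrite !S_INR.
  replace ((INR n + 1 + 1) * t) with ((INR n + 1) * t + t) by ring.
  replace (INR n * t) with ((INR n + 1) * t - t) by ring.
  rewrite sin_plus, sin_minus. ring.
Qed.

Lemma sinp_ratio_top (p : nat) : (3 <= p)%nat ->
  sinp p (p - 2) / sinp p (p - 1) = lam p.
Proof.
  intros Hp. pose proof (INR_ge3 p Hp).
  assert (Hs1 : 0 < sinp p 1) by (apply sinp_gt0; lia).
  unfold sinp, lam in *. rewrite !minus_INR by lia. simpl (INR 2). simpl (INR 1) in *.
  set (t := PI / INR p) in *.
  replace ((INR p - (1 + 1)) * t) with (PI - 2 * t) by (unfold t; field; lra).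
  replace ((INR p - 1) * t) with (PI - t) by (unfold t; field; lra).
  rewrite !sin_PI_x, sin_2a. rewrite Rmult_1_l in *. field. lra.
Qed.

Lemma sinp_ratio_12 (p : nat) : (3 <= p)%nat -> sinp p 1 / sinp p 2 = / lam p.
Proof.
  intros Hp. pose proof (sinp_rec p 0) as Hrec. rewrite sinp_0, Rplus_0_l in Hrec.
  assert (0 < sinp p 1) by (apply sinp_gt0; lia). pose proof (lam_gt0 p Hp).
  rewrite <- Hrec. field. lra.
Qed.

Lemma ratio_shift_le (l s0 s1 s2 y : R) : 0 < s1 -> 0 < s2 ->
  l * s1 = s0 + s2 -> s0 / s1 <= y < l -> s1 / s2 <= / (l - y).
Proof.
  intros Hs1 Hs2 Hrec [Hy Hyl].
  assert (Hnext : s2 / s1 = l - s0 / s1).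
  { apply (Rmult_eq_reg_r s1); [|lra]. field_simplify; lra. }
  replace (s1 / s2) with (/ (s2 / s1)) by (field; lra).
  apply Rinv_le_contravar; lra.
Qed.

Lemma lcf_ones_run_le (p : nat) (a : R) : (3 <= p)%nat ->
  forall j m k, (k <= p - 2)%nat ->
  sinp p k / sinp p (S k) <= lcf_alpha p a m ->
  (forall i, (i < j)%nat -> lcf_digit p a (m + i) = 1%Z) ->
  (j <= p - 2 - k)%nat.
Proof.
  intros Hp j. pose proof (lam_gt0 p Hp) as Hl.
  induction j as [|j IH]; intros m k Hk Hratio Hones; [lia|].
  assert (Hm : lcf_digit p a m = 1%Z) by (rewrite <- (Nat.add_0_r m); apply Hones; lia).
  pose proof (lcf_digit_of_eq1 p Hl _ Hm) as Hbnd.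
  destruct (Nat.eq_dec k (p - 2)) as [->|Hk'].
  - replace (S (p - 2)) with (p - 1)%nat in Hratio by lia.
    rewrite sinp_ratio_top in Hratio by exact Hp. lra.
  - enough (j <= p - 2 - S k)%nat by lia.
    apply (IH (S m) (S k)); [lia| |].
    + rewrite lcf_alpha_S_digit1 by assumption.
      apply (ratio_shift_le _ (sinp p k)); [apply sinp_gt0; lia .. | apply sinp_rec | lra].
    + intros i Hi. replace (S m + i)%nat with (m + S i)%nat by lia. apply Hones. lia.
Qed.

Theorem lemma2p3 :
  forall (p : nat), (3 <= p)%nat ->
  forall (a : R),
    (forall m j : nat, (1 <= m)%nat ->
       (forall i : nat, (i < j)%nat -> lcf_digit p a (m + i) = 1%Z) ->
       (j <= p - 3)%nat) /\
    (forall j : nat,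
       (forall i : nat, (i < j)%nat -> lcf_digit p a i = 1%Z) ->
       (j <= p - 2)%nat).
Proof.
  intros p Hp a. pose proof (lam_gt0 p Hp) as Hl. split.
  - intros m j Hm Hones. destruct m as [|m]; [lia|].
    enough (j <= p - 2 - 1)%nat by lia.
    apply (lcf_ones_run_le p a Hp j (S m) 1); [lia| |exact Hones].
    rewrite sinp_ratio_12 by exact Hp. now apply lcf_alpha_S_ge_inv_lam.
  - intros j Hones. destruct j as [|j]; [lia|].
    enough (S j <= p - 2 - 0)%nat by lia.
    apply (lcf_ones_run_le p a Hp (S j) 0 0); [lia| |exact Hones].
    rewrite sinp_0, Rdiv_0_l.
    apply (lcf_digit_of_eq1 p Hl), (Hones 0%nat). lia.
Qed.
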